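(* Let $n$ be an integer and let $G_{n}=\langle s,t\mid swt^{-1}w^{-1}=1\rangle$ with $w=(ts^{-1}tst^{-1}s)^n$ (this is the fundamental group of the exterior of the two-bridge knot with Conway's notation $C(2n,3)$). For $M\in\mathbb{C}\setminus\{0\}$ and $x\in\mathbb{C}$ define \[ \rho(s)=\begin{pmatrix} M & 1\\ 0 & M^{-1}\end{pmatrix},\qquad \rho(t)=\begin{pmatrix} M & 0\\ 2-M^{2}-M^{-2}-x & M^{-1}\end{pmatrix}. \] Then $\rho$ defines a representation $G_n\to \mathrm{SL}(2,\mathbb{C})$ if and only if $x$ is a root of the Riley–Mednykh polynomial $P_{2n}=P_{2n}(x,M)$ given explicitly by \[ P_{2n}=\sum_{i=0}^{2n}\binom{n+\lfloor i/2\rfloor}{i}M^{4n}\left(M^{2}+M^{-2}+x-1\right)^{i}(-x)^{\lfloor (1+i)/2\rfloor}\quad\text{if } n\ge 0, \] \[ P_{2n}=\sum_{i=0}^{-2n-1}\binom{-n+\lfloor (i-1)/2\rfloor}{i}M^{-4n-2}\left(-M^{2}-M^{-2}-x+1\right)^{i}(-x)^{\lfloor (1+i)/2\rfloor}\quad\text{if } n<0. \]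
   Context: $\binom{a}{b}$ denotes the usual binomial coefficient and $\lfloor\cdot\rfloor$ the floor function. ''$\rho$ defines a representation'' means that the assignment on the generators $s,t$ respects the relation $swt^{-1}w^{-1}=1$. *)

From HB Require Import structures.
From mathcomp Require Import all_boot all_order all_algebra.
From mathcomp Require Import complex.
From mathcomp Require Import reals.
Set Implicit Arguments. Unset Strict Implicit. Unset Printing Implicit Defensive.
Import Order.TTheory GRing.Theory Num.Theory.
Local Open Scope ring_scope.

Definition rho_s (C : fieldType) (M : C) : 'M[C]_2 :=
  \matrix_(i < 2, j < 2)
    if i == 0 then (if j == 0 then M else 1) else (if j == 0 then 0 else M^-1).

Definition rho_t (C : fieldType) (M x : C) : 'M[C]_2 :=
  \matrix_(i < 2, j < 2)
    if i == 0 then (if j == 0 then M else 0)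
    else (if j == 0 then 2 - M ^+ 2 - M ^- 2 - x else M^-1).

Definition word_w (C : fieldType) (n : int) (S T : 'M[C]_2) : 'M[C]_2 :=
  (T * S^-1 * T * S * T^-1 * S) ^ n.

Definition defines_rep (C : fieldType) (n : int) (S T : 'M[C]_2) : Prop :=
  let W := word_w n S T in S * W * T^-1 * W^-1 = 1.

(* Riley--Mednykh polynomial P_{2n}(x, M), evaluated.
   n = Posz k (n = k >= 0):
     sum_{i=0}^{2k} C(k + floor(i/2), i) M^{4k} (M^2+M^-2+x-1)^i (-x)^{floor((1+i)/2)}
   n = Negz k (n = -(k+1) < 0), m := -n = k+1:
     sum_{i=0}^{2m-1} C(m + floor((i-1)/2), i) M^{4m-2} (-M^2-M^-2-x+1)^i (-x)^{floor((1+i)/2)}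
   where m + floor((i-1)/2) = floor((2m+i-1)/2) = (2m+i).-1 %/ 2 (all quantities >= 0). *)
Definition P2n (C : fieldType) (n : int) (x M : C) : C :=
  match n with
  | Posz k =>
      \sum_(i < (2 * k).+1)
        ('C(k + i %/ 2, i))%:R * M ^+ (4 * k)
          * (M ^+ 2 + M ^- 2 + x - 1) ^+ i * (- x) ^+ ((1 + i) %/ 2)
  | Negz k =>
      let m := k.+1 in
      \sum_(i < 2 * m)
        ('C((2 * m + i).-1 %/ 2, i))%:R * M ^+ (4 * m - 2)
          * (- M ^+ 2 - M ^- 2 - x + 1) ^+ i * (- x) ^+ ((1 + i) %/ 2)
  end.

(* Write A for the image of t s^-1 t s t^-1 s, so that rho(w) = A^n.  With
   z = M^2 + M^-2 + x - 1, A has determinant 1 and trace 2 - x z^2, so by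
   Cayley-Hamilton A^k = U_(k-1) A - U_(k-2) for Chebyshev-type polynomials U
   evaluated at the trace.  All powers of A and of A^-1 have the shape
   [[a, b], [y b, d]] with y the lower-left entry of rho(t), and for such a
   matrix W the relation rho(s) W = W rho(t) reduces to the single linear
   equation d = (M^-1 - M) b.  The relation thus becomes a Chebyshev expression
   in the trace, and splitting P_2n into its even and odd parts recognises it,
   via the binomial expansion of U_k, as the same expression times a power of M. *)

From HB Require Import structures.
From mathcomp Require Import all_boot all_order all_algebra.
From mathcomp Require Import complex.
From mathcomp Require Import reals.
From mathcomp Require Import zify ring.
Set Implicit Arguments. Unset Strict Implicit. Unset Printing Implicit Defensive.
Import Order.TTheory GRing.Theory Num.Theory.
Local Open Scope ring_scope.

Section Chebyshev.
Variable R : comPzRingType.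

(* (cheb t k).1 = U_(k-1) and (cheb t k).2 = U_(k-2), where U_(j+1) = t U_j - U_(j-1)
   with U_(-2) = -1 and U_(-1) = 0, i.e. U_j(t) is the Chebyshev polynomial of the
   second kind evaluated at t / 2. *)
Fixpoint cheb (t : R) (k : nat) : R * R :=
  if k is k'.+1 then let pq := cheb t k' in (t * pq.1 - pq.2, pq.1) else (0, -1).

Lemma expr_cheb (A : lalgType R) (a : A) (t : R) k :
  a ^+ 2 = t *: a - 1 -> a ^+ k = (cheb t k).1 *: a - (cheb t k).2%:A.
Proof.
move=> a2; elim: k => [|k IHk] /=; first by rewrite scale0r scaleN1r sub0r opprK.
rewrite exprSr IHk mulrBl -scalerAl -expr2 a2 mulr_algl scalerBr scalerA.
by rewrite mulrC scalerBl addrAC.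
Qed.

Variable w : R.

Definition bin_even_sum k N := \sum_(j < N) ('C(k + j, 2 * j))%:R * w ^+ j.
Definition bin_odd_sum k N := \sum_(j < N) ('C(k + j, (2 * j).+1))%:R * w ^+ j.

Lemma bin_even_sum_stable k N : (k < N)%N -> bin_even_sum k N.+1 = bin_even_sum k N.
Proof.
by move=> ltkN; rewrite /bin_even_sum big_ord_recr /= bin_small ?mul0r ?addr0 //; lia.
Qed.

Lemma bin_odd_sum_stable k N : (k <= N)%N -> bin_odd_sum k N.+1 = bin_odd_sum k N.
Proof.
by move=> lekN; rewrite /bin_odd_sum big_ord_recr /= bin_small ?mul0r ?addr0 //; lia.
Qed.

Lemma bin_odd_sumS k N : bin_odd_sum k.+1 N = bin_odd_sum k N + bin_even_sum k N.
Proof.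
rewrite /bin_odd_sum /bin_even_sum -big_split /=; apply: eq_bigr => j _.
by rewrite addSn binS natrD mulrDl.
Qed.

Lemma bin_even_sumS k N :
  bin_even_sum k.+1 N.+1 = bin_even_sum k N.+1 + w * bin_odd_sum k.+1 N.
Proof.
rewrite /bin_even_sum /bin_odd_sum !big_ord_recl /= !addn0 !bin0 -addrA.
congr (_ + _); rewrite mulr_sumr -big_split /=; apply: eq_bigr => j _.
rewrite /bump /= !add1n addnS mulnS !addSn binS natrD mulrDl exprS add0n addnS.
by congr (_ + _); ring.
Qed.

Lemma bin_sums_cheb k :
  bin_odd_sum k k.+1 = (cheb (2 + w) k).1 /\
  bin_even_sum k k.+1 = (1 + w) * (cheb (2 + w) k).1 - (cheb (2 + w) k).2.
Proof.
elim: k => [|k [IHo IHe]].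
  rewrite /bin_odd_sum /bin_even_sum !big_ord1 /= bin0 bin_small // !mul0r.
  by split=> //; ring.
have odd_eq : bin_odd_sum k.+1 k.+2 = (cheb (2 + w) k.+1).1.
  by rewrite bin_odd_sumS bin_odd_sum_stable // bin_even_sum_stable // IHo IHe /=; ring.
split=> //.
by rewrite bin_even_sumS bin_even_sum_stable // IHe -bin_odd_sum_stable // odd_eq /=; ring.
Qed.

End Chebyshev.

Section Mx2.
Variable R : comUnitRingType.

Definition mx2 (a b c d : R) : 'M[R]_2 :=
  \matrix_(i < 2, j < 2)
    if i == 0 then (if j == 0 then a else b) else (if j == 0 then c else d).

Lemma mx2_mul (a b c d a' b' c' d' : R) :
  mx2 a b c d * mx2 a' b' c' d' =
  mx2 (a * a' + b * c') (a * b' + b * d') (c * a' + d * c') (c * b' + d * d').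
Proof.
apply/matrixP => i j; rewrite !mxE !big_ord_recl big_ord0 !mxE /=.
by case: i => [[|[|//]] ?]; case: j => [[|[|//]] ?]; rewrite /= addr0.
Qed.

Lemma scale_mx2_sub_alg (p q a b c d : R) :
  p *: mx2 a b c d - q%:A = mx2 (p * a - q) (p * b) (p * c) (p * d - q).
Proof.
apply/matrixP => i j; rewrite !mxE.
by case: i => [[|[|//]] ?]; case: j => [[|[|//]] ?]; rewrite /= ?mulr1 ?mulr0 ?subr0.
Qed.

Lemma mx2_one : 1 = mx2 1 0 0 1.
Proof.
apply/matrixP => i j; rewrite !mxE.
by case: i => [[|[|//]] ?]; case: j => [[|[|//]] ?].
Qed.

Lemma mx2_inj (a b c d a' b' c' d' : R) : mx2 a b c d = mx2 a' b' c' d' ->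
  [/\ a = a', b = b', c = c' & d = d'].
Proof.
move=> eq_mx; have entry i j := congr1 (fun X : 'M[R]_2 => X i j) eq_mx.
by move: (entry 0 0) (entry 0 1) (entry 1 0) (entry 1 1); rewrite !mxE.
Qed.

Section Unimodular.
Variables a b c d : R.
Hypothesis det1 : a * d - b * c = 1.

Lemma mx2_sqr : mx2 a b c d ^+ 2 = (a + d) *: mx2 a b c d - 1.
Proof. by rewrite expr2 -[1]scale1r scale_mx2_sub_alg mx2_mul -det1; congr mx2; ring. Qed.

Lemma mx2_inv : mx2 a b c d \is a GRing.unit /\ (mx2 a b c d)^-1 = mx2 d (- b) (- c) a.
Proof.
have mxK : mx2 a b c d * mx2 d (- b) (- c) a = 1.
  by rewrite mx2_mul mx2_one -det1; congr mx2; ring.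
have Kmx : mx2 d (- b) (- c) a * mx2 a b c d = 1.
  by rewrite mx2_mul mx2_one -det1; congr mx2; ring.
have unit_mx : mx2 a b c d \is a GRing.unit by apply/unitrP; exists (mx2 d (- b) (- c) a).
by split=> //; rewrite -[_^-1]mulr1 -mxK mulKr.
Qed.

End Unimodular.
End Mx2.

Lemma big_ord_even_odd (V : nmodType) (G : nat -> V) n :
  \sum_(i < n) G i = \sum_(j < uphalf n) G j.*2 + \sum_(j < n./2) G (j.*2).+1.
Proof.
elim: n => [|n IHn]; first by rewrite !big_ord0 addr0.
rewrite big_ord_recr IHn /= uphalf_half -[n in G n](odd_double_half n).
case: (odd n) => /=.
  by rewrite add1n [X in _ = _ + X]big_ord_recr addrA.
by rewrite !add0n [in RHS]big_ord_recr addrAC.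
Qed.

Lemma relator_eq1 (R : unitRingType) (S T W : R) :
  T \is a GRing.unit -> W \is a GRing.unit ->
  S * W * T^-1 * W^-1 = 1 <-> S * W = W * T.
Proof.
move=> uT uW; split => [rel | ->]; last by rewrite mulrK // divrr.
by rewrite -[S * W](divrK uT) -[S * W / T](divrK uW) rel mul1r.
Qed.

Section Relator.
Variables (F : fieldType) (M y : F).
Hypothesis M_neq0 : M != 0.
Let S := mx2 M 1 0 M^-1.
Let T := mx2 M 0 y M^-1.

Lemma intertwine_mx2 (w11 w12 w22 : F) :
  S * mx2 w11 w12 (y * w12) w22 = mx2 w11 w12 (y * w12) w22 * T <->
  w22 = (M^-1 - M) * w12.
Proof.
rewrite !mx2_mul; split => [/mx2_inj [_ e12 _ _] | ->].
  by move: e12; rewrite mul1r mulr0 add0r => /(canRL (addKr _)) ->; ring.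
by congr (mx2 _ _ _ _); ring.
Qed.

Lemma relator_expr_mx2 (b11 b12 b22 : F) m :
  b11 * b22 - b12 * (y * b12) = 1 ->
  S * mx2 b11 b12 (y * b12) b22 ^+ m * T^-1 * (mx2 b11 b12 (y * b12) b22 ^+ m)^-1 = 1 <->
  (cheb (b11 + b22) m).1 * (b22 + (M - M^-1) * b12) - (cheb (b11 + b22) m).2 = 0.
Proof.
move=> det1; have [unitB _] := mx2_inv det1.
have detT : M * M^-1 - 0 * y = 1 by rewrite mul0r subr0 divff.
have [unitT _] := mx2_inv detT.
rewrite relator_eq1 ?unitrX // (expr_cheb _ (mx2_sqr det1)) scale_mx2_sub_alg.
case: (cheb _ m) => p q /=; rewrite [p * (y * b12)]mulrCA intertwine_mx2.
have -> : p * (b22 + (M - M^-1) * b12) - q = p * b22 - q - (M^-1 - M) * (p * b12).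
  by ring.
by split=> [-> | /eqP]; [rewrite subrr | rewrite subr_eq0 => /eqP].
Qed.
End Relator.

Section Riley.
Variables (F : fieldType) (M x : F).
Let y : F := 2 - M ^+ 2 - M ^- 2 - x.
Let z : F := M ^+ 2 + M ^- 2 + x - 1.
Let w : F := - x * z ^+ 2.

Lemma P2n_Posz k :
  P2n (Posz k) x M =
  M ^+ (4 * k) * ((cheb (2 + w) k).1 * (1 + w - x * z) - (cheb (2 + w) k).2).
Proof.
have [odd_cheb even_cheb] := bin_sums_cheb w k.
rewrite bin_odd_sum_stable // in odd_cheb.
pose G i := ('C(k + i %/ 2, i))%:R * M ^+ (4 * k) * z ^+ i * (- x) ^+ ((1 + i) %/ 2).
rewrite /P2n -/z (big_ord_even_odd G) /= mul2n half_double uphalf_double.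
transitivity (M ^+ (4 * k) * (bin_even_sum w k k.+1 + (- x * z) * bin_odd_sum w k k)).
  rewrite /bin_even_sum /bin_odd_sum mulrDr mulr_sumr !mulr_sumr.
  congr (_ + _); apply: eq_bigr => j _; rewrite /G /w exprMn -exprM -mul2n.
    have -> : ((2 * j) %/ 2 = j)%N by lia.
    have -> : ((1 + 2 * j) %/ 2 = j)%N by lia.
    by ring.
  have -> : ((2 * j).+1 %/ 2 = j)%N by lia.
  have -> : ((1 + (2 * j).+1) %/ 2 = j.+1)%N by lia.
  by rewrite !exprS; ring.
by rewrite even_cheb odd_cheb; ring.
Qed.

Lemma P2n_Negz k :
  P2n (Negz k) x M =
  M ^+ (4 * k.+1 - 2) *
    ((cheb (2 + w) k.+1).1 * (1 + x * z) - (cheb (2 + w) k.+1).2).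
Proof.
have [_ even_cheb] := bin_sums_cheb w k.
have [odd_cheb _] := bin_sums_cheb w k.+1.
rewrite bin_odd_sum_stable // in odd_cheb.
rewrite /P2n (_ : - M ^+ 2 - M ^- 2 - x + 1 = - z); last by rewrite /z; ring.
pose G i := ('C((2 * k.+1 + i).-1 %/ 2, i))%:R * M ^+ (4 * k.+1 - 2) * (- z) ^+ i
  * (- x) ^+ ((1 + i) %/ 2).
rewrite (big_ord_even_odd G) mul2n uphalf_double half_double.
transitivity (M ^+ (4 * k.+1 - 2) *
  (bin_even_sum w k k.+1 + (x * z) * bin_odd_sum w k.+1 k.+1)).
  rewrite /bin_even_sum /bin_odd_sum mulrDr mulr_sumr !mulr_sumr.
  congr (_ + _); apply: eq_bigr => j _; rewrite /G /w exprMn -exprM -!mul2n.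
    have -> : ((2 * k.+1 + 2 * j).-1 %/ 2 = k + j)%N by lia.
    have -> : ((1 + 2 * j) %/ 2 = j)%N by lia.
    by rewrite [(- z) ^+ _]exprM sqrrN -exprM; ring.
  have -> : ((2 * k.+1 + (2 * j).+1).-1 %/ 2 = k.+1 + j)%N by lia.
  have -> : ((1 + (2 * j).+1) %/ 2 = j.+1)%N by lia.
  by rewrite !exprS [(- z) ^+ _]exprM sqrrN -exprM; ring.
by rewrite even_cheb odd_cheb /=; ring.
Qed.

Hypothesis M_neq0 : M != 0.

Let a11 : F := 2 * M ^+ 2 - 2 * M ^+ 4 + M ^+ 6 + x - 2 * x * M ^+ 2 + 2 * x * M ^+ 4
  + x ^+ 2 * M ^+ 2.
Let a12 : F := M - M ^+ 3 + M ^+ 5 + x * M^-1 - x * M + 2 * x * M ^+ 3 + x ^+ 2 * M.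
Let a22 : F := 2 - 2 * M ^+ 2 + 2 * M ^+ 4 - M ^+ 6 - x * M ^- 4 + 2 * x * M ^- 2 - 4 * x
  + 4 * x * M ^+ 2 - 3 * x * M ^+ 4 - 2 * x ^+ 2 * M ^- 2 + 2 * x ^+ 2 - 3 * x ^+ 2 * M ^+ 2
  - x ^+ 3.

Lemma rho_word_mx :
  let S := rho_s M in let T := rho_t M x in
  T * S^-1 * T * S * T^-1 * S = mx2 a11 a12 (y * a12) a22.
Proof.
have detS : M * M^-1 - 1 * 0 = 1 by rewrite mulr0 subr0 divff.
have detT : M * M^-1 - 0 * y = 1 by rewrite mul0r subr0 divff.
rewrite /= (mx2_inv detS).2 (mx2_inv detT).2 !mx2_mul; rewrite /a11 /a12 /a22 /y.
by congr (mx2 _ _ _ _); field; exact: M_neq0.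
Qed.

Lemma det_word_mx : a11 * a22 - a12 * (y * a12) = 1.
Proof. by rewrite /a11 /a12 /a22 /y; field; exact: M_neq0. Qed.

Lemma trace_word_mx : a11 + a22 = 2 + w.
Proof. by rewrite /a11 /a22 /w /z; field; exact: M_neq0. Qed.

Lemma intertwine_coef_word_mx : a22 + (M - M^-1) * a12 = 1 + w - x * z.
Proof. by rewrite /a12 /a22 /w /z; field; exact: M_neq0. Qed.

Lemma defines_rep_Posz k :
  defines_rep (Posz k) (rho_s M) (rho_t M x) <->
  (cheb (2 + w) k).1 * (1 + w - x * z) - (cheb (2 + w) k).2 = 0.
Proof.
rewrite /defines_rep /word_w rho_word_mx -trace_word_mx -intertwine_coef_word_mx.
exact: relator_expr_mx2 det_word_mx.
Qed.

Lemma defines_rep_Negz k :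
  defines_rep (Negz k) (rho_s M) (rho_t M x) <->
  (cheb (2 + w) k.+1).1 * (1 + x * z) - (cheb (2 + w) k.+1).2 = 0.
Proof.
have det_inv : a22 * a11 - - a12 * (y * - a12) = 1 by rewrite -det_word_mx; ring.
have -> : 2 + w = a22 + a11 by rewrite [RHS]addrC trace_word_mx.
have -> : 1 + x * z = a11 + (M - M^-1) * - a12.
  transitivity (2 + w - (1 + w - x * z)); first by ring.
  by rewrite -trace_word_mx -intertwine_coef_word_mx; ring.
rewrite /defines_rep /word_w rho_word_mx -[_ ^ Negz k]/((_ ^+ k.+1)^-1) -exprVn.
by rewrite (mx2_inv det_word_mx).2 -mulrN; apply: relator_expr_mx2 det_inv.
Qed.

End Riley.

Theorem lemma1 (R : realType) (n : int) (M x : R[i]) :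
  M != 0 ->
  (defines_rep n (rho_s M) (rho_t M x) <-> P2n n x M = 0).
Proof.
move=> M_neq0.
have cancel_pow m (c : R[i]) : M ^+ m * c = 0 <-> c = 0.
  split=> [/eqP | ->]; last exact: mulr0.
  by rewrite mulf_eq0 expf_eq0 (negbTE M_neq0) andbF => /eqP.
case: n => k.
  rewrite P2n_Posz; apply: iff_trans (defines_rep_Posz x M_neq0 k) _.
  exact: iff_sym (cancel_pow _ _).
rewrite P2n_Negz; apply: iff_trans (defines_rep_Negz x M_neq0 k) _.
exact: iff_sym (cancel_pow _ _).
Qed.
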